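(* Let $n\geq 3$ and let $C_n^*$ be the bigraded complex described in the context. Let $\phi\colon C_n^*\to C_n^*$ be an $R$-linear chain map that is homogeneous of bigrading $(c_1,c_2)$ with $c_1>-2n$ and $c_2>-2n$, and suppose that the image of $\phi(\alpha_n^* )$ is a boundary in the complex $C_n^*\otimes_R \mathbb{F}[\mathcal{U}]/(\mathcal{U}^{n-1})$, where $\mathcal{V}$ acts on $\mathbb{F}[\mathcal{U}]/(\mathcal{U}^{n-1})$ as $1$. Then $\phi(\alpha_n^* )$ is divisible by $\mathcal{U}^{n-1}$.
   Context: Let $\mathbb{F}=\mathbb{Z}/2$ and $R=\mathbb{F}[\mathcal{U},\mathcal{V}]$, bigraded by $(\operatorname{gr}_{\mathcal{U}},\operatorname{gr}_{\mathcal{V}})$ with $\mathcal{U}$ of bigrading $(-2,0)$ and $\mathcal{V}$ of bigrading $(0,-2)$. For $n\geq 3$, $C_n^*$ is the free $R$-module with basis $\alpha^*_s$ ($1\leq s\leq 2n-1$); $\widetilde{\alpha}^*_s$ ($1\leq s\leq n-2$ and $n+1\leq s\leq 2n-2$); $b^{*,(s)}_{n-1}$ ($1\leq s\leq n-2$); $b^{*,(s)}_{n}$ ($1\leq s\leq 2n-2$); $b^{*,(s)}_{n+1}$ ($n+1\leq s\leq 2n-2$), with $R$-linear differential $\partial$ given by $\partial\alpha^*_s=0$, $\partial\widetilde{\alpha}^*_s=0$, and $\partial b^{*,(s)}_{n-1}=\mathcal{U}^{n(n-1)/2}\mathcal{V}^{n(n-1)/2}\alpha^*_s+\mathcal{V}^{n-s-1}\widetilde{\alpha}^*_s$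 for $1\leq s\leq n-2$; $\partial b^{*,(s)}_{n}=\mathcal{U}^{n(n+1)/2-s}\mathcal{V}^{n(n+1)/2}\alpha^*_{s+1}+\mathcal{U}^{n}\widetilde{\alpha}^*_s$ for $1\leq s\leq n-2$; $\partial b^{*,(s)}_{n}=\mathcal{U}^{n(n+1)/2}\mathcal{V}^{n(n-1)/2-n+s+1}\alpha^*_s+\mathcal{U}^{n(n+1)/2-s}\mathcal{V}^{n(n+1)/2}\alpha^*_{s+1}$ for $n-1\leq s\leq n$; $\partial b^{*,(s)}_{n}=\mathcal{U}^{n(n+1)/2}\mathcal{V}^{n(n-1)/2-n+s+1}\alpha^*_s+\mathcal{V}^{n}\widetilde{\alpha}^*_s$ for $n+1\leq s\leq 2n-2$; $\partial b^{*,(s)}_{n+1}=\mathcal{U}^{n(n-1)/2}\mathcal{V}^{n(n-1)/2}\alpha^*_{s+1}+\mathcal{U}^{s-n}\widetilde{\alpha}^*_s$ for $n+1\leq s\leq 2n-2$. The basis elements are assigned bigradings so that $\partial$ is homogeneous of bigrading $(-1,-1)$ (unique up to an overall shift; any such choice is fixed). A map is homogeneous of bigrading $(c_1,c_2)$ if it sends homogeneous elements of bigrading $(a,b)$ to homogeneous elements of bigrading $(a+c_1,b+c_2)$. *)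

From HB Require Import structures.
From mathcomp Require Import all_boot all_order all_algebra.
Set Implicit Arguments. Unset Strict Implicit. Unset Printing Implicit Defensive.
Import Order.TTheory GRing.Theory Num.Theory.
Local Open Scope ring_scope.

Notation F2 := 'F_2.

(* R = F[U,V], represented as (F[U])[V]: the outer polynomial variable is V,
   the inner one is U.  The coefficient of U^i V^j in p : R is (p`_j)`_i. *)
Notation Rbi := {poly {poly F2}}.
Definition varU : Rbi := ('X : {poly F2})%:P.
Definition varV : Rbi := 'X.
Definition mono (i j : nat) : Rbi := varU ^+ i * varV ^+ j.
Definition coefUV (p : Rbi) (i j : nat) : F2 := (p`_j)`_i.

(* Generators of C_n^*: a pair (k, s) with
   k = 0 : alpha*_s                1 <= s <= 2n-1
   k = 1 : alpha~*_s               1 <= s <= n-2  or  n+1 <= s <= 2n-2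
   k = 2 : b*_{n-1}^{(s)}          1 <= s <= n-2
   k = 3 : b*_{n}^{(s)}            1 <= s <= 2n-2
   k = 4 : b*_{n+1}^{(s)}          n+1 <= s <= 2n-2 *)
Definition gen_valid (n : nat) (x : 'I_5 * 'I_(2 * n)) : bool :=
  let k := nat_of_ord x.1 in let s := nat_of_ord x.2 in
  match k with
  | 0 => (1 <= s <= 2 * n - 1)%N
  | 1 => ((1 <= s <= n - 2) || (n + 1 <= s <= 2 * n - 2))%N
  | 2 => (1 <= s <= n - 2)%N
  | 3 => (1 <= s <= 2 * n - 2)%N
  | _ => (n + 1 <= s <= 2 * n - 2)%N
  end.

Definition gen (n : nat) := {x : 'I_5 * 'I_(2 * n) | @gen_valid n x}.

Definition gkind n (g : gen n) : nat := nat_of_ord (val g).1.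
Definition gidx n (g : gen n) : nat := nat_of_ord (val g).2.

Definition tA (n : nat) : nat := (n * n.-1)./2.
Definition tB (n : nat) : nat := (n * n.+1)./2.

(* coefficient of generator (k', s') in the differential of generator (k, s) *)
Definition rawd (n k s k' s' : nat) : Rbi :=
  let a := tA n in let b := tB n in
  let at_ (kk ss : nat) (m : Rbi) := if (k' == kk)%N && (s' == ss)%N then m else 0 in
  match k with
  | 2 => at_ 0%N s (mono a a) + at_ 1%N s (mono 0 (n - s - 1))
  | 3 =>
    if (s <= n - 2)%N then at_ 0%N s.+1 (mono (b - s) b) + at_ 1%N s (mono n 0)
    else if (s <= n)%N then at_ 0%N s (mono b (a + (s.+1 - n))) + at_ 0%N s.+1 (mono (b - s) b)
    else at_ 0%N s (mono b (a + (s.+1 - n))) + at_ 1%N s (mono 0 n)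
  | 4 => at_ 0%N s.+1 (mono a a) + at_ 1%N s (mono (s - n) 0)
  | _ => 0
  end.

Notation Cmod n := {ffun gen n -> Rbi^o}.

Definition basis n (g : gen n) : Cmod n := [ffun z => (z == g)%:R].

Definition dgen n (g : gen n) : Cmod n := [ffun z => rawd n (gkind g) (gidx g) (gkind z) (gidx z)].
Definition dC n (x : Cmod n) : Cmod n := [ffun z => \sum_(g : gen n) x g * dgen g z].

(* x : C_n^* is homogeneous of bigrading (a, b) w.r.t. the bigrading gr of the
   basis: every monomial U^i V^j y (y a generator) occurring in x has bigrading
   gr y + (-2i, -2j) = (a, b).  (0 is homogeneous of every bigrading.) *)
Definition homog n (gr : gen n -> int * int) (x : Cmod n) (a b : int) : Prop :=
  forall (z : gen n) (i j : nat), coefUV (x z) i j != 0 ->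
    (gr z).1 - 2 * (i%:Z) = a /\ (gr z).2 - 2 * (j%:Z) = b.

Definition map_homog n (gr : gen n -> int * int) (f : Cmod n -> Cmod n) (c1 c2 : int) : Prop :=
  forall (x : Cmod n) (a b : int), homog gr x a b -> homog gr (f x) (a + c1) (b + c2).

(* C_n^* (x)_R F[U]/(U^(n-1)), with V acting as 1: elements are represented by
   coefficient vectors in F[U] (taken modulo U^(n-1)); the differential is that
   of C_n^* with V set to 1. *)
Notation Cbar n := {ffun gen n -> {poly F2}}.
Definition setV1 (p : Rbi) : {poly F2} := p.[1].
Definition dbar n (y : Cbar n) : Cbar n :=
  [ffun z => \sum_(g : gen n) y g * setV1 (dgen g z)].
Definition reduce n (x : Cmod n) : Cbar n := [ffun z => setV1 (x z)].

Definition is_boundary_mod (n m : nat) (x : Cbar n) : Prop :=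
  exists y : Cbar n, forall z : gen n, ('X ^+ m : {poly F2}) %| (dbar y z - x z).

(* Comparing the two terms of the differential of b*_{n-1}, b*_n and b*_{n+1} shows that
   gr(alpha*_{s+1}) = gr(alpha*_s) + (-2s, 2(2n-1-s)): along the chain alpha*_1, ..., alpha*_{2n-1}
   the U-grading decreases and the V-grading increases, each by at least 2n across alpha*_n.
   Every other generator then lies at least 2n below alpha*_n in one of the two gradings, so
   a map shifting the bigrading by more than (-2n, -2n) sends alpha*_n to a single monomial
   U^i V^j alpha*_n (or 0).  Every coefficient of the differential hitting alpha*_n is
   divisible by U^(n-1), hence so is the alpha*_n-coordinate of any boundary mod U^(n-1),
   and the boundary hypothesis forces i >= n-1. *)

From HB Require Import structures.
From mathcomp Require Import all_boot all_order all_algebra.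
From mathcomp Require Import zify.
Import Order.TTheory GRing.Theory Num.Theory.
Local Open Scope ring_scope.

Lemma tBE n : tB n = (tA n + n)%N.
Proof.
rewrite /tB /tA; have -> : (n * n.+1 = n * n.-1 + n.*2)%N by case: n => //= m; lia.
by rewrite halfD odd_double andbF doubleK.
Qed.

Lemma leq_tA n : (3 <= n)%N -> (n <= tA n)%N.
Proof.
move=> hn; rewrite /tA.
have := halfK (n * n.-1); have : (n * 2 <= n * n.-1)%N by rewrite leq_mul2l; lia.
by case: odd => /=; lia.
Qed.

Lemma coefUV_mono i j i' j' :
  coefUV (mono i j) i' j' = ((i' == i) && (j' == j))%:R.
Proof.
rewrite /coefUV /mono /varU /varV -rmorphXn coefCM coefXn.
case: (j' == j); last by rewrite mulr0 coef0 andbF.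
by rewrite mulr1 coefXn andbT.
Qed.

Lemma setV1_mono i j : setV1 (mono i j) = 'X^i.
Proof.
by rewrite /setV1 /mono /varU /varV -rmorphXn hornerCM hornerXn expr1n mulr1.
Qed.

Lemma coef_setV1_single {p : Rbi} {i j : nat} :
  coefUV p i j != 0 -> (forall j', coefUV p i j' != 0 -> j' = j) ->
  (setV1 p)`_i = coefUV p i j.
Proof.
move=> pij_nz only_j; have j_lt : (j < size p)%N.
  by rewrite ltnNge; apply: contra pij_nz; rewrite /coefUV => /(nth_default 0) ->; rewrite coef0.
rewrite /setV1 horner_coef coef_sum (bigD1 (Ordinal j_lt)) //= expr1n mulr1.
rewrite big1 ?addr0 // => k /eqP k_ne; rewrite expr1n mulr1.
apply/eqP/contraT => /only_j k_j; case: k_ne; exact: val_inj.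
Qed.

Lemma varU_exp_factor {p : Rbi} {m : nat} :
  (forall i j, coefUV p i j != 0 -> (m <= i)%N) ->
  p = varU ^+ m * map_poly (drop_poly m) p.
Proof.
move=> hm; rewrite /varU -rmorphXn; apply/polyP => j.
rewrite coefCM coef_map_id0 ?drop_poly0r // -{1}(poly_take_drop m p`_j) mulrC.
suff -> : take_poly m p`_j = 0 by rewrite add0r.
apply/polyP => i; rewrite coef_take_poly coef0; case: ifP => // i_lt.
by apply/eqP; apply: contraT => /hm; rewrite leqNgt i_lt.
Qed.

Lemma coef_dvdXn {R : fieldType} {q : {poly R}} {m i : nat} :
  'X^m %| q -> (i < m)%N -> q`_i = 0.
Proof. by move=> /divpK <- i_lt; rewrite coefMXn i_lt. Qed.

Lemma homog_coefUV_inj {n gr} {x : Cmod n} {a b z i j i' j'} :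
  homog gr x a b -> coefUV (x z) i j != 0 -> coefUV (x z) i' j' != 0 ->
  i' = i /\ j' = j.
Proof. by move=> hx /hx [? ?] /hx [? ?]; split; lia. Qed.

Lemma homog_basis {n} (gr : gen n -> int * int) (g : gen n) :
  homog gr (basis g) (gr g).1 (gr g).2.
Proof.
move=> z i j; rewrite /basis ffunE /coefUV.
have [->|_] := eqVneq z g; last by rewrite coef0 coef0 eqxx.
rewrite coef1; have [->|_] := eqVneq j 0%N; last by rewrite coef0 eqxx.
rewrite coef1; have [->|_] := eqVneq i 0%N; last by rewrite eqxx.
by rewrite !mulr0 !subr0.
Qed.

Lemma dC_basis {n} (g : gen n) : dC (basis g) = dgen g.
Proof.
apply/ffunP => z; rewrite ffunE (bigD1 g) //= big1 ?addr0.
  by rewrite /basis ffunE eqxx mul1r.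
by move=> h /negbTE h_ne; rewrite /basis ffunE h_ne mul0r.
Qed.

Lemma gen_inj {n} (g g' : gen n) :
  gkind g = gkind g' -> gidx g = gidx g' -> g = g'.
Proof.
rewrite /gkind /gidx => /val_inj ek /val_inj es.
by apply: val_inj; case: (val g) (val g') ek es => [? ?] [? ?] /= -> ->.
Qed.

Lemma gen_valid_bounds {n} (g : gen n) :
  match gkind g with
  | 0 => (1 <= gidx g <= 2 * n - 1)%N
  | 1 => ((1 <= gidx g <= n - 2) || (n + 1 <= gidx g <= 2 * n - 2))%N
  | 2 => (1 <= gidx g <= n - 2)%N
  | 3 => (1 <= gidx g <= 2 * n - 2)%N
  | _ => (n + 1 <= gidx g <= 2 * n - 2)%N
  end.
Proof. by case: g => x hx. Qed.

(* In lemma names, [talpha] stands for alpha~* and [bnm1], [bn], [bnp1] for b*_{n-1}, b*_n, b*_{n+1}. *)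
Section Generators.
Variable n : nat.

Lemma exists_gen k s (hk : (k < 5)%N) (hs : (s < 2 * n)%N) :
  @gen_valid n (Ordinal hk, Ordinal hs) -> exists g : gen n, gkind g = k /\ gidx g = s.
Proof. by move=> hv; exists (exist (fun x => gen_valid x) _ hv). Qed.

Ltac exists_gen_tac k :=
  move=> ?; unshelve apply: (@exists_gen k _ isT); rewrite /gen_valid /=; lia.

Lemma exists_alpha s : (1 <= s <= 2 * n - 1)%N ->
  exists g : gen n, gkind g = 0%N /\ gidx g = s.
Proof. exists_gen_tac 0%N. Qed.

Lemma exists_talpha s : (1 <= s <= n - 2)%N || (n + 1 <= s <= 2 * n - 2)%N ->
  exists g : gen n, gkind g = 1%N /\ gidx g = s.
Proof. exists_gen_tac 1%N. Qed.

Lemma exists_bnm1 s : (1 <= s <= n - 2)%N ->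
  exists g : gen n, gkind g = 2%N /\ gidx g = s.
Proof. exists_gen_tac 2%N. Qed.

Lemma exists_bn s : (1 <= s <= 2 * n - 2)%N ->
  exists g : gen n, gkind g = 3%N /\ gidx g = s.
Proof. exists_gen_tac 3%N. Qed.

Lemma exists_bnp1 s : (n + 1 <= s <= 2 * n - 2)%N ->
  exists g : gen n, gkind g = 4%N /\ gidx g = s.
Proof. exists_gen_tac 4%N. Qed.

End Generators.

Section Differential.
Variable n : nat.
Local Notation a := (tA n).
Local Notation b := (tB n).

Lemma rawd_bnm1_alpha s : rawd n 2 s 0 s = mono a a.
Proof. by rewrite /rawd /= eqxx addr0. Qed.

Lemma rawd_bnm1_talpha s : rawd n 2 s 1 s = mono 0 (n - s - 1).
Proof. by rewrite /rawd /= eqxx add0r. Qed.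

Lemma rawd_bn_alpha s : (n - 2 < s)%N -> rawd n 3 s 0 s = mono b (a + (s.+1 - n)).
Proof.
move=> s_gt; rewrite /rawd /= leqNgt s_gt /= eqxx.
by case: ifP => _; rewrite ?(ltn_eqF (ltnSn s)) addr0.
Qed.

Lemma rawd_bn_alphaS s : (s <= n)%N -> rawd n 3 s 0 s.+1 = mono (b - s) b.
Proof.
move=> s_le; rewrite /rawd /= s_le eqxx.
by case: ifP => _; rewrite ?(gtn_eqF (ltnSn s)) ?addr0 ?add0r.
Qed.

Lemma rawd_bn_talpha_lo s : (s <= n - 2)%N -> rawd n 3 s 1 s = mono n 0.
Proof. by move=> s_le; rewrite /rawd /= s_le eqxx add0r. Qed.

Lemma rawd_bn_talpha_hi s : (n < s)%N -> rawd n 3 s 1 s = mono 0 n.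
Proof.
move=> s_gt; have s_gt' : (n - 2 < s)%N by lia.
by rewrite /rawd /= leqNgt s_gt' leqNgt s_gt /= eqxx add0r.
Qed.

Lemma rawd_bnp1_alphaS s : rawd n 4 s 0 s.+1 = mono a a.
Proof. by rewrite /rawd /= eqxx addr0. Qed.

Lemma rawd_bnp1_talpha s : rawd n 4 s 1 s = mono (s - n) 0.
Proof. by rewrite /rawd /= eqxx add0r. Qed.

End Differential.

Lemma dvdp_rawd_alpha n k s : (3 <= n)%N -> ('X^(n.-1) : {poly F2}) %| setV1 (rawd n k s 0 n).
Proof.
move=> hn; have := tBE n; have := leq_tA n hn => ha hb.
have dvdD p q : 'X^(n.-1) %| setV1 p -> 'X^(n.-1) %| setV1 q -> 'X^(n.-1) %| setV1 (p + q).
  by rewrite /setV1 hornerD; apply: dvdp_add.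
rewrite /rawd; case: k => [|[|[|[|[|k]]]]] /=; repeat case: ifP => [?|/negbT ?].
all: repeat apply: dvdD; rewrite ?setV1_mono ?dvdp_exp2l /setV1 ?horner0 ?dvdp0 //; lia.
Qed.

Section Grading.
Context {n : nat} (hn : (3 <= n)%N) {gr : gen n -> int * int}.
Hypothesis hgr : map_homog gr (@dC n) (-1) (-1).

Lemma gr_edge {g z : gen n} {k s k' s' i j} :
  gkind g = k -> gidx g = s -> gkind z = k' -> gidx z = s' ->
  rawd n k s k' s' = mono i j ->
  (gr z).1 - 2 * i%:Z = (gr g).1 - 1 /\ (gr z).2 - 2 * j%:Z = (gr g).2 - 1.
Proof.
move=> <- <- <- <- d_gz; apply: (hgr _ _ _ (homog_basis gr g)).
by rewrite dC_basis /dgen ffunE d_gz coefUV_mono !eqxx oner_eq0.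
Qed.

Lemma gr_alphaS {s} {z z' : gen n} :
  gkind z = 0%N -> gidx z = s -> gkind z' = 0%N -> gidx z' = s.+1 ->
  (1 <= s <= 2 * n - 2)%N ->
  (gr z).1 = (gr z').1 + 2 * s%:Z /\ (gr z').2 = (gr z).2 + 2 * (2 * n%:Z - 1 - s%:Z).
Proof.
move=> zk zs z'k z's s_range; have := tBE n; have := leq_tA n hn => ha hb.
have [s_lo|s_gt] := leqP s (n - 2); [|have [s_mid|s_hi] := leqP s n].
- have [t [tk ts]] := exists_talpha n s ltac:(lia).
  have [g [gk gs]] := exists_bnm1 n s ltac:(lia).
  have [h [hk hs]] := exists_bn n s ltac:(lia).
  have [e1 e1'] := gr_edge gk gs zk zs (rawd_bnm1_alpha n s).
  have [e2 e2'] := gr_edge gk gs tk ts (rawd_bnm1_talpha n s).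
  have [e3 e3'] := gr_edge hk hs z'k z's (rawd_bn_alphaS n s ltac:(lia)).
  have [e4 e4'] := gr_edge hk hs tk ts (rawd_bn_talpha_lo n s s_lo).
  split; lia.
- have [h [hk hs]] := exists_bn n s ltac:(lia).
  have [e1 e1'] := gr_edge hk hs zk zs (rawd_bn_alpha n s ltac:(lia)).
  have [e2 e2'] := gr_edge hk hs z'k z's (rawd_bn_alphaS n s ltac:(lia)).
  split; lia.
- have [t [tk ts]] := exists_talpha n s ltac:(lia).
  have [h [hk hs]] := exists_bn n s ltac:(lia).
  have [g [gk gs]] := exists_bnp1 n s ltac:(lia).
  have [e1 e1'] := gr_edge hk hs zk zs (rawd_bn_alpha n s ltac:(lia)).
  have [e2 e2'] := gr_edge hk hs tk ts (rawd_bn_talpha_hi n s ltac:(lia)).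
  have [e3 e3'] := gr_edge gk gs z'k z's (rawd_bnp1_alphaS n s).
  have [e4 e4'] := gr_edge gk gs tk ts (rawd_bnp1_talpha n s).
  split; lia.
Qed.

Lemma gr_alpha_mono {s t} {z z' : gen n} :
  gkind z = 0%N -> gidx z = s -> gkind z' = 0%N -> gidx z' = t -> (s <= t)%N ->
  (gr z').1 <= (gr z).1 /\ (gr z).2 <= (gr z').2.
Proof.
move=> zk zs; have := gen_valid_bounds z; rewrite zk zs /= => s_range.
elim: t z' => [|t IH] z' z'k z't s_le; first by lia.
have [s_eq|s_ne] := eqVneq s t.+1.
  by rewrite (gen_inj z' z) ?zk ?zs ?s_eq.
have := gen_valid_bounds z'; rewrite z'k z't /= => t_range.
have [w [wk wt]] := exists_alpha n t ltac:(lia).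
have [IH1 IH2] := IH w wk wt ltac:(lia).
have [step1 step2] := gr_alphaS wk wt z'k z't ltac:(lia).
split; lia.
Qed.

Context {al : gen n}.
Hypotheses (alk : gkind al = 0%N) (als : gidx al = n).

Lemma gr_alpha_far_lo {s} {z : gen n} : gkind z = 0%N -> gidx z = s -> (s < n)%N ->
  (gr z).2 + 2 * n%:Z <= (gr al).2.
Proof.
move=> zk zs s_lt; have als' : gidx al = n.-1.+1 by rewrite als; lia.
have [w [wk ws]] := exists_alpha n n.-1 ltac:(lia).
have [_ mono2] := gr_alpha_mono zk zs wk ws ltac:(lia).
have [_ step2] := gr_alphaS wk ws alk als' ltac:(lia).
lia.
Qed.

Lemma gr_alpha_far_hi {s} {z : gen n} : gkind z = 0%N -> gidx z = s -> (n < s)%N ->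
  (gr z).1 + 2 * n%:Z <= (gr al).1.
Proof.
move=> zk zs s_gt; have := gen_valid_bounds z; rewrite zk zs /= => s_range.
have [w [wk ws]] := exists_alpha n n.+1 ltac:(lia).
have [mono1 _] := gr_alpha_mono wk ws zk zs s_gt.
have [step1 _] := gr_alphaS alk als wk ws ltac:(lia).
lia.
Qed.

Lemma gr_talpha_far {z : gen n} : gkind z = 1%N ->
  (gr z).1 + 2 * n%:Z <= (gr al).1 \/ (gr z).2 + 2 * n%:Z <= (gr al).2.
Proof.
move=> zk; have := tBE n; have := leq_tA n hn => ha hb.
have := gen_valid_bounds z; rewrite zk; set s := gidx z => /= /orP[s_lo|s_hi].
- have [w [wk ws]] := exists_alpha n s ltac:(lia).
  have [g [gk gs]] := exists_bnm1 n s s_lo.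
  have [_ e1] := gr_edge gk gs wk ws (rawd_bnm1_alpha n s).
  have [_ e2] := gr_edge gk gs zk erefl (rawd_bnm1_talpha n s).
  have := gr_alpha_far_lo wk ws ltac:(lia); right; lia.
- have [w [wk ws]] := exists_alpha n s ltac:(lia).
  have [g [gk gs]] := exists_bn n s ltac:(lia).
  have [e1 _] := gr_edge gk gs wk ws (rawd_bn_alpha n s ltac:(lia)).
  have [e2 _] := gr_edge gk gs zk erefl (rawd_bn_talpha_hi n s ltac:(lia)).
  have := gr_alpha_far_hi wk ws ltac:(lia); left; lia.
Qed.

Lemma gr_far {z : gen n} : z != al ->
  (gr z).1 + 2 * n%:Z <= (gr al).1 \/ (gr z).2 + 2 * n%:Z <= (gr al).2.
Proof.
move=> z_ne; have := tBE n; have := leq_tA n hn => ha hb.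
have := gen_valid_bounds z; set s := gidx z.
case zk: (gkind z) => [|[|[|[|[|k]]]]] /= s_range.
- have [s_lt|s_gt|s_eq] := ltngtP s n.
  + by right; apply: gr_alpha_far_lo zk erefl s_lt.
  + by left; apply: gr_alpha_far_hi zk erefl s_gt.
  + by case/eqP: z_ne; apply: gen_inj; rewrite ?zk ?alk ?als.
- exact: gr_talpha_far.
- have [w [wk ws]] := exists_alpha n s ltac:(lia).
  have [_ e] := gr_edge zk erefl wk ws (rawd_bnm1_alpha n s).
  have := gr_alpha_far_lo wk ws ltac:(lia); right; lia.
- have [s_lt|s_ge] := ltnP s n.
  + have [w [wk ws]] := exists_alpha n s.+1 ltac:(lia).
    have [_ e] := gr_edge zk erefl wk ws (rawd_bn_alphaS n s ltac:(lia)).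
    have [_ mono2] := gr_alpha_mono wk ws alk als s_lt.
    right; lia.
  + have [w [wk ws]] := exists_alpha n s ltac:(lia).
    have [e _] := gr_edge zk erefl wk ws (rawd_bn_alpha n s ltac:(lia)).
    have [mono1 _] := gr_alpha_mono alk als wk ws s_ge.
    left; lia.
- have [w [wk ws]] := exists_alpha n s.+1 ltac:(lia).
  have [e _] := gr_edge zk erefl wk ws (rawd_bnp1_alphaS n s).
  have := gr_alpha_far_hi wk ws ltac:(lia); left; lia.
- by have := ltn_ord (val z).1; rewrite -/(gkind z) zk.
Qed.

End Grading.

Lemma dvdp_dbar_alpha {n} (y : Cbar n) {al : gen n} :
  (3 <= n)%N -> gkind al = 0%N -> gidx al = n -> ('X^(n.-1) : {poly F2}) %| dbar y al.
Proof.
move=> hn alk als; rewrite /dbar ffunE.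
apply: (big_ind (fun q : {poly F2} => 'X^(n.-1) %| q)) => [|p q|g _].
- exact: dvdp0.
- exact: dvdp_add.
- by apply: dvdp_mull; rewrite /dgen ffunE alk als dvdp_rawd_alpha.
Qed.

Lemma boundary_dvdp_alpha {n} {x : Cmod n} {al : gen n} :
  (3 <= n)%N -> gkind al = 0%N -> gidx al = n ->
  is_boundary_mod n.-1 (reduce x) -> ('X^(n.-1) : {poly F2}) %| setV1 (x al).
Proof.
move=> hn alk als [y /(_ al)].
by rewrite (dvdp_subr _ (dvdp_dbar_alpha y hn alk als)) ffunE.
Qed.

Theorem lemma2p10 (n : nat) (hn : (3 <= n)%N)
    (gr : gen n -> int * int)
    (hgr : map_homog gr (@dC n) (-1) (-1))
    (phi : {linear Cmod n -> Cmod n})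
    (c1 c2 : int)
    (hchain : forall x : Cmod n, phi (dC x) = dC (phi x))
    (hphi : map_homog gr phi c1 c2)
    (hc1 : - (2 * n%:Z) < c1) (hc2 : - (2 * n%:Z) < c2)
    (alpha_n : gen n) (halpha : gkind alpha_n = 0%N /\ gidx alpha_n = n)
    (hbd : @is_boundary_mod n n.-1 (reduce (phi (basis alpha_n)))) :
  exists w : Cmod n, phi (basis alpha_n) = varU ^+ n.-1 *: w.
Proof.
case: halpha => alk als; set x := phi (basis alpha_n).
have hx : homog gr x ((gr alpha_n).1 + c1) ((gr alpha_n).2 + c2).
  exact: hphi (homog_basis gr alpha_n).
have dvd_alpha := boundary_dvdp_alpha hn alk als hbd.
suff U_ge z i j : coefUV (x z) i j != 0 -> (n.-1 <= i)%N.
  exists [ffun z => map_poly (drop_poly n.-1) (x z)]; apply/ffunP => z.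
  by rewrite !ffunE; exact: varU_exp_factor (U_ge z).
move=> xij_nz; have [e1 e2] := hx z i j xij_nz.
have [z_eq|z_ne] := eqVneq z alpha_n; last first.
  by case: (gr_far hn hgr alk als z_ne) => ?; lia.
rewrite z_eq in xij_nz; rewrite leqNgt; apply/negP => i_lt.
have only_j j' : coefUV (x alpha_n) i j' != 0 -> j' = j.
  by case/(homog_coefUV_inj hx xij_nz).
have := coef_dvdXn dvd_alpha i_lt.
by rewrite (coef_setV1_single xij_nz only_j); apply/eqP.
Qed.
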